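(* Let $T\ge1$, $\tau>0$ with $\tau L<\frac12$, and let $(x_t)_{t=0}^{T+1}$ be generated from a deterministic $x_0$ by proximal SGD $x_{t+1}=\operatorname{prox}_{\tau g}(x_t-\tau\nabla f_{i_t}(x_t))$. Set $\epsilon'=\frac{1-2\tau L}{1+2\tau L}$, $a=2\tau L(1+\epsilon')$ and $v=(1+1/\epsilon')\sigma_*^2\tau$. Suppose that for every $t\in\{0,\dots,T\}$ and every random vector $z_t$ measurable with respect to $\sigma(x_0,\dots,x_t)$, \[ \mathbb{E}_t[h(x_{t+1})-h(z_t)-a\,h(x_t)+a\,h^*]\le\frac{1}{2\tau}\mathbb{E}_t[\|x_t-z_t\|^2-\|x_{t+1}-z_t\|^2]+v. \] Define $\alpha_{-1}=\alpha_0=1$ and $\alpha_t=\frac{T-t+2}{a+T-t+1}\alpha_{t-1}$ for $t=1,\dots,T$. Then for every minimizer $x^*$ of $h$, \[ \mathbb{E}[h(x_{T+1})-h^*]\le\frac{1}{2\tau\alpha_T}\mathbb{E}\|x_0-x^*\|^2+\frac{v}{\alpha_T}\alpha_0+\frac{v}{\alpha_T}\sum_{t=1}^T\alpha_t+\frac{1}{\alpha_T}\mathbb{E}[h(x_0)-h^*]. \]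
   Context: Let $D$ be a probability distribution on an index set, and for each index $i$ let $f_i:\mathbb{R}^n\to\mathbb{R}$ be convex and differentiable with $L$-Lipschitz gradient ($L>0$). Let $f(x)=\mathbb{E}_{i\sim D}[f_i(x)]$ with $\mathbb{E}_{i\sim D}[\nabla f_i(x)]=\nabla f(x)$. Let $g:\mathbb{R}^n\to\mathbb{R}\cup\{+\infty\}$ be proper, convex, lower semicontinuous, $h=f+g$, assume $\arg\min h\neq\emptyset$, $h^*=\min h$, and $\sigma_*^2:=\mathbb{E}_{i\sim D}\|\nabla f_i(\bar x)\|^2<\infty$ for some $\bar x\in\arg\min h$. $\operatorname{prox}_{\tau g}(y)=\arg\min_z\{\tau g(z)+\tfrac12\|y-z\|^2\}$. The indices $i_t$ are i.i.d. from $D$ with $i_t$ independent of $x_0,\dots,x_t$; $\mathbb{E}_t$ is conditional expectation given $\sigma(x_0,\dots,x_t)$. *)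

From HB Require Import structures.
From mathcomp Require Import all_boot all_order all_algebra.
From mathcomp Require Import all_classical all_reals all_analysis.

Set Implicit Arguments.
Unset Strict Implicit.
Unset Printing Implicit Defensive.

Import Order.TTheory GRing.Theory Num.Theory.
Import numFieldNormedType.Exports.

Local Open Scope classical_set_scope.
Local Open Scope ring_scope.

Section Defs.
Context {R : realType} {n : nat}.

Definition dotv (u w : 'rV[R]_n) : R := \sum_(j < n) u ord0 j * w ord0 j.
Definition sqnorm (u : 'rV[R]_n) : R := \sum_(j < n) u ord0 j ^+ 2.
Definition enorm (u : 'rV[R]_n) : R := Num.sqrt (sqnorm u).

Definition convex_rfun (F : 'rV[R]_n -> R) : Prop :=
  forall u w (l : R), 0 <= l -> l <= 1 ->
    F (l *: u + (1 - l) *: w) <= l * F u + (1 - l) * F w.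

Definition convex_efun (G : 'rV[R]_n -> \bar R) : Prop :=
  forall (u w : 'rV[R]_n) (l : R), 0 <= l -> l <= 1 ->
    (G (l *: u + (1 - l) *: w)%R <= l%:E * G u + (1 - l)%:E * G w)%E.

Definition proper_efun (G : 'rV[R]_n -> \bar R) : Prop :=
  (forall u, G u != -oo%E) /\ (exists u, (G u < +oo)%E).

Definition has_gradient (F : 'rV[R]_n -> R) (gr : 'rV[R]_n -> 'rV[R]_n) :
  Prop :=
  forall u, differentiable F u /\ forall d, 'd F u d = dotv (gr u) d.

Definition is_prox (tau : R) (G : 'rV[R]_n -> \bar R) (y p : 'rV[R]_n) : Prop :=
  forall z, (tau%:E * G p + (sqnorm (y - p) / 2)%:E
             <= tau%:E * G z + (sqnorm (y - z) / 2)%:E)%E.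

Definition sigma_past {d} {Omega : measurableType d}
  (x : nat -> Omega -> 'rV[R]_n) (t : nat) : set (set Omega) :=
  <<s \bigcup_(s in [set s | (s <= t)%N])
        \bigcup_(j in [set: 'I_n])
          preimage_set_system setT (fun w => x s w ord0 j) measurable >>.

Definition measurable_wrt {Omega : Type} (F : set (set Omega))
  (z : Omega -> 'rV[R]_n) : Prop :=
  forall (j : 'I_n) (B : set R), measurable B ->
    F ((fun w => z w ord0 j) @^-1` B).

End Defs.

Definition mutually_independent {R : realType} {d dI} {Omega : measurableType d}
  {I : measurableType dI} (P : probability Omega R) (idx : nat -> Omega -> I) :
  Prop :=
  forall (S : seq nat) (B : nat -> set I), uniq S ->
    (forall s, measurable (B s)) ->
    P (\bigcap_(s in [set s | s \in S]) (idx s @^-1` B s)) =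
    \big[*%E/1%E]_(s <- S) P (idx s @^-1` B s).

Fixpoint alpha {R : realType} (a : R) (T : nat) (t : nat) : R :=
  match t with
  | 0 => 1
  | s.+1 => (T%:R - s.+1%:R + 2) / (a + T%:R - s.+1%:R + 1) * alpha a T s
  end.

(* Write d_t = E[h(x_t) - h^*].  Integrating the one-step inequality with the
   comparison point z = x^* gives
     d_{t+1} - a d_t <= c (E|x_t - x^*|^2 - E|x_{t+1} - x^*|^2) + v,
   and with z = x_s (1 <= s <= t)
     d_{t+1} - d_s - a d_t <= c (E|x_t - x_s|^2 - E|x_{t+1} - x_s|^2) + v,
   where c = 1/(2 tau).  Adding to the first inequality the second ones weighted
   by alpha_s - alpha_{s-1} >= 0 and summing over t, the recursion defining
   alpha_t makes every d_s with 1 <= s <= T cancel, leaving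
     alpha_T d_{T+1} <= c |x_0 - x^*|^2 + v sum_t alpha_t + a d_0.
   The integrability of h(x_{t+1}) and |x_{t+1} - z|^2 needed to integrate is
   itself obtained from the one-step inequality, by induction on t; when
   h(x_0) = +oo the bound is trivial.  The convexity, smoothness and independence
   assumptions only serve to establish the one-step inequality, which is assumed
   here and is used only with A = Omega. *)

From HB Require Import structures.
From mathcomp Require Import all_boot all_order all_algebra.
From mathcomp Require Import all_classical all_reals all_analysis.
From mathcomp Require Import measurable_realfun ring lra.

Set Implicit Arguments.
Unset Strict Implicit.
Unset Printing Implicit Defensive.

Import Order.TTheory GRing.Theory Num.Theory.
Import numFieldNormedType.Exports.

Local Open Scope classical_set_scope.
Local Open Scope ring_scope.

Section random_vector_measurability.
Context (R : realType) (n : nat) (d : measure_display) (Omega : measurableType d).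

Lemma nbhs_rat_ball (U : set 'rV[R]_n) (y : 'rV[R]_n) : nbhs y U ->
  exists qr : {ffun 'I_n -> rat} * rat,
    let c : 'rV[R]_n := \row_j ratr (qr.1 j) in ball c (ratr qr.2) y /\ ball c (ratr qr.2) `<=` U.
Proof.
move=> /nbhs_ballP [e e_gt0 yeU].
have [r /andP [r_gt0 r_lt]] : exists r : rat, (0 < ratr r :> R) && (ratr r < e / 2).
  have [r] := @rat_in_itvoo R 0 (e / 2) ltac:(by rewrite divr_gt0).
  by rewrite in_itv /=; exists r.
have [q qP] : exists q : 'I_n -> rat, forall j, `|y ord0 j - ratr (q j)| < (ratr r : R).
  apply: (@fin_all_exists _ (fun _ => rat)
    (fun j (q : rat) => `|y ord0 j - ratr q| < (ratr r : R))) => j.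
  have [q] := @rat_in_itvoo R (y ord0 j - ratr r) (y ord0 j + ratr r)
    ltac:(by rewrite ltrBlDr -addrA ltrDl addr_gt0).
  rewrite in_itv /= => /andP [q_gt q_lt]; exists q.
  rewrite ltr_norml; apply/andP; split; first by rewrite ltrNl opprB ltrBlDl.
  by rewrite ltrBlDr addrC -ltrBlDr.
exists ([ffun j => q j], r) => /=; split.
  by split => // i j; rewrite (ord1 i) /ball /= !mxE ffunE distrC.
move=> z [_ zb]; apply: yeU; split => // i j; rewrite (ord1 i) /ball /=.
have := zb ord0 j; have := qP j; rewrite /ball /= !mxE ffunE => yq qz.
rewrite -(subrKA (ratr (q j))) (splitr e).
by rewrite (le_lt_trans (ler_normD _ _)) // ltrD // (lt_trans _ r_lt).
Qed.

Lemma continuous_lower_semicontinuous (f : 'rV[R]_n -> R) : continuous f ->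
  lower_semicontinuous (fun u => (f u)%:E).
Proof.
move=> f_cont u a; rewrite lte_fin => afu.
exists (f @^-1` [set r | a < r]); first by apply: f_cont; exact: lt_nbhsr.
by move=> w /=; rewrite lte_fin.
Qed.

Variable X : Omega -> 'rV[R]_n.
Hypothesis X_meas : forall j, measurable_fun setT (fun w => X w ord0 j).

Lemma measurable_preimage_ball (c : 'rV[R]_n) (r : R) : measurable (X @^-1` ball c r).
Proof.
have [r_gt0|r_le0] := ltP 0 r; last first.
  rewrite (_ : _ @^-1` _ = set0) //; apply/seteqP; split => w //= [r_gt0 _].
  by move: r_le0; rewrite leNgt r_gt0.
have -> : X @^-1` ball c r =
    \bigcap_(j in [set: 'I_n]) ((fun w => X w ord0 j) @^-1` `](c ord0 j - r), (c ord0 j + r)[).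
  apply/seteqP; split => w /=.
    by move=> [_ cXw] j _ /=; have := cXw ord0 j; rewrite /ball /= in_itv /= ltr_distlC.
  move=> cXw; split => // i j; rewrite (ord1 i) /ball /= ltr_distlC; have := cXw j I.
  by rewrite /= in_itv.
apply: fin_bigcap_measurable => [|j _]; first exact: finite_finset.
by rewrite -[X in measurable X]setTI; exact: X_meas.
Qed.

(* Balls with rational centre and radius form a countable base of 'rV[R]_n. *)
Lemma measurable_preimage_open (U : set 'rV[R]_n) : open U -> measurable (X @^-1` U).
Proof.
move=> oU.
pose B (k : nat) : set Omega :=
  if @unpickle ({ffun 'I_n -> rat} * rat)%type k is Some qr then
    let b := ball (\row_j ratr (qr.1 j) : 'rV[R]_n) (ratr qr.2) in
    if pselect (b `<=` U) then X @^-1` b else set0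
  else set0.
have -> : X @^-1` U = \bigcup_k B k.
  apply/seteqP; split => w /=.
    move=> /(oU _)/nbhs_rat_ball [qr [cXw bU]].
    by exists (pickle qr) => //; rewrite /B pickleK; case: pselect.
  case=> k _; rewrite /B; case: unpickle => [qr|//].
  by case: pselect => // bU /bU.
apply: bigcupT_measurable => k; rewrite /B; case: unpickle => [qr|//].
by case: pselect => bU; [exact: measurable_preimage_ball|exact: measurable0].
Qed.

Lemma lower_semicontinuous_measurable_comp (G : 'rV[R]_n -> \bar R) :
  lower_semicontinuous G -> measurable_fun setT (G \o X).
Proof.
move=> /lower_semicontinuousP Gopen.
apply: (measurability _ (ErealGenOInfty.measurableE R)) => /= _ [_ [a ->]] <-.
rewrite setTI (_ : _ @^-1` _ = X @^-1` [set u | a%:E < G u]%E).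
  exact/measurable_preimage_open/Gopen.
by apply/seteqP; split => w /=; rewrite in_itv /= andbT.
Qed.

Lemma measurable_continuous_add_lsc_comp (f : 'rV[R]_n -> R) (G : 'rV[R]_n -> \bar R) :
  continuous f -> lower_semicontinuous G ->
  measurable_fun setT (fun w => ((f (X w))%:E + G (X w))%E).
Proof.
move=> f_cont G_lsc; apply: emeasurable_funD.
- exact: lower_semicontinuous_measurable_comp (continuous_lower_semicontinuous f_cont).
- exact: lower_semicontinuous_measurable_comp G_lsc.
Qed.

Lemma measurable_sqnormB (Z : Omega -> 'rV[R]_n) :
  (forall j, measurable_fun setT (fun w => Z w ord0 j)) ->
  measurable_fun setT (fun w => sqnorm (X w - Z w)).
Proof.
move=> Z_meas; apply: measurable_sum => j.
rewrite (_ : (fun w => _) = (fun w => (X w ord0 j - Z w ord0 j) ^+ 2)); last first.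
  by apply: funext => w; rewrite !mxE.
by apply: measurable_funX; exact: measurable_funB.
Qed.

End random_vector_measurability.

Section integral_of_difference.
Context (R : realType) (d : measure_display) (Omega : measurableType d).
Variable mu : {measure set Omega -> \bar R}.
Local Open Scope ereal_scope.

Lemma ge0_sube_eq (p q u w : \bar R) : 0 <= p -> 0 <= q ->
  p <= u -> q <= w -> p + w = u + q -> u < +oo \/ w < +oo -> p - q = u - w.
Proof.
case: p q u w => [p| |] [q| |] [u| |] [w| |] //= _ _ _ _ e; rewrite ?ltry ?ltxx;
  try by case.
have puwq : (p + w = u + q)%R by apply: EFin_inj; rewrite !EFinD.
by move=> _; congr (_%:E); lra.
Qed.

Lemma integral_EFin_ge0 (F : Omega -> R) : (forall w, (0 <= F w)%R) ->
  0 <= \int[mu]_w (F w)%:E.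
Proof. by move=> F_ge0; apply: integral_ge0 => w _; rewrite lee_fin. Qed.

Lemma ge0_integrableP (F : Omega -> R) : measurable_fun setT F ->
  (forall w, (0 <= F w)%R) ->
  mu.-integrable setT (EFin \o F) <-> \int[mu]_w (F w)%:E < +oo.
Proof.
move=> mF F_ge0; have -> : \int[mu]_w (F w)%:E = \int[mu]_w `|(F w)%:E|.
  by apply: eq_integral => w _; rewrite gee0_abs // lee_fin.
split => [/integrableP [] //|Ffin].
by apply/integrableP; split => //; exact/measurable_EFinP.
Qed.

Lemma integralB_ge0 (F G : Omega -> R) :
  measurable_fun setT F -> measurable_fun setT G ->
  (forall w, (0 <= F w)%R) -> (forall w, (0 <= G w)%R) ->
  \int[mu]_w (F w)%:E < +oo \/ \int[mu]_w (G w)%:E < +oo ->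
  \int[mu]_w (F w - G w)%:E = \int[mu]_w (F w)%:E - \int[mu]_w (G w)%:E.
Proof.
move=> mF mG F_ge0 G_ge0 FG_fin.
pose pos w := Num.max (F w - G w)%R 0%R; pose neg w := Num.max (G w - F w)%R 0%R.
have mpos : measurable_fun setT pos by apply: measurable_maxr => //; exact: measurable_funB.
have mneg : measurable_fun setT neg by apply: measurable_maxr => //; exact: measurable_funB.
have pos_ge0 w : (0 <= pos w)%R by rewrite le_max lexx orbT.
have neg_ge0 w : (0 <= neg w)%R by rewrite le_max lexx orbT.
have mEFin (H : Omega -> R) : measurable_fun setT H -> measurable_fun setT (EFin \o H).
  by move=> mH; exact/measurable_EFinP.
have -> : \int[mu]_w (F w - G w)%:E = \int[mu]_w (pos w)%:E - \int[mu]_w (neg w)%:E.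
  rewrite integralE; congr (_ - _); apply: eq_integral => w _.
    by rewrite funeposE EFin_max.
  by rewrite funenegE EFin_max -EFinN opprB.
apply: ge0_sube_eq => //; [exact: integral_EFin_ge0|exact: integral_EFin_ge0|..].
- apply: ge0_le_integral => //; try exact: mEFin; try by move=> *; rewrite lee_fin.
  by move=> w _; rewrite lee_fin ge_max F_ge0 andbT gerBl.
- apply: ge0_le_integral => //; try exact: mEFin; try by move=> *; rewrite lee_fin.
  by move=> w _; rewrite lee_fin ge_max G_ge0 andbT gerBl.
- rewrite -!ge0_integralD //; try exact: mEFin; try by move=> *; rewrite lee_fin.
  apply: eq_integral => w _; rewrite -!EFinD /pos /neg.
  congr (_%:E); case: (leP (F w) (G w)) => FG.
    by rewrite (@max_r _ _ (F w - G w)%R) ?(@max_l _ _ (G w - F w)%R); lra.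
  by rewrite (@max_l _ _ (F w - G w)%R) ?(@max_r _ _ (G w - F w)%R); lra.
Qed.

Lemma le_integralB_ge0 (F G K M : Omega -> R) :
  measurable_fun setT F -> measurable_fun setT G ->
  measurable_fun setT K -> measurable_fun setT M ->
  (forall w, (0 <= F w)%R) -> (forall w, (0 <= G w)%R) ->
  (forall w, (0 <= K w)%R) -> (forall w, (0 <= M w)%R) ->
  mu.-integrable setT (EFin \o G) -> mu.-integrable setT (EFin \o K) ->
  \int[mu]_w (F w - G w)%:E <= \int[mu]_w (K w - M w)%:E ->
  [/\ mu.-integrable setT (EFin \o F), mu.-integrable setT (EFin \o M) &
      \int[mu]_w (F w)%:E - \int[mu]_w (G w)%:E <=
      \int[mu]_w (K w)%:E - \int[mu]_w (M w)%:E].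
Proof.
move=> mF mG mK mM F_ge0 G_ge0 K_ge0 M_ge0 /(ge0_integrableP mG G_ge0) Gfin
  /(ge0_integrableP mK K_ge0) Kfin.
rewrite !integralB_ge0 //; [|by left|by right] => le_FG_KM.
suff [Ffin Mfin] : \int[mu]_w (F w)%:E < +oo /\ \int[mu]_w (M w)%:E < +oo.
  by split => //; apply/ge0_integrableP.
move: le_FG_KM (integral_EFin_ge0 F_ge0) (integral_EFin_ge0 G_ge0)
  (integral_EFin_ge0 M_ge0) Gfin Kfin.
case: (\int[mu]_w (F w)%:E) (\int[mu]_w (G w)%:E) (\int[mu]_w (K w)%:E)
  (\int[mu]_w (M w)%:E) => [f| |] [g| |] [k| |] [m| |] //=.
by rewrite !ltry.
Qed.

End integral_of_difference.

Section sqnorm.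
Context (R : realType) (n : nat).
Implicit Types u w c : 'rV[R]_n.

Lemma sqnorm_ge0 u : 0 <= sqnorm u.
Proof. by apply: sumr_ge0 => j _; exact: sqr_ge0. Qed.

Lemma sqnorm0 : sqnorm (0 : 'rV[R]_n) = 0.
Proof. by apply: big1 => j _; rewrite mxE expr0n. Qed.

Lemma sqnormB_le u w c : sqnorm (u - w) <= 2 * sqnorm (u - c) + 2 * sqnorm (w - c).
Proof.
rewrite /sqnorm !mulr_sumr -big_split /=; apply: ler_sum => j _; rewrite !mxE.
by have := sqr_ge0 (u ord0 j + w ord0 j - 2 * c ord0 j); rewrite !expr2; nra.
Qed.

End sqnorm.

Section sigma_past.
Context (R : realType) (n : nat) (d : measure_display) (Omega : measurableType d).
Variable x : nat -> Omega -> 'rV[R]_n.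

Lemma sigma_past_setT t : sigma_past x t setT.
Proof. by rewrite -(setD0 setT); apply: sigma_algebraCD; exact: sigma_algebra0. Qed.

Lemma measurable_wrt_cst t (c : 'rV[R]_n) : measurable_wrt (sigma_past x t) (fun=> c).
Proof.
move=> j B _; have [Bc|Bc] := pselect (B (c ord0 j)).
  by rewrite (_ : _ @^-1` _ = setT); [exact: sigma_past_setT|apply/seteqP; split].
by rewrite (_ : _ @^-1` _ = set0); [exact: sigma_algebra0|apply/seteqP; split].
Qed.

Lemma measurable_wrt_sigma_past t s : (s <= t)%N -> measurable_wrt (sigma_past x t) (x s).
Proof.
move=> st j B mB; apply: sub_sigma_algebra.
by exists s => //; exists j => //; exists B => //; rewrite setTI.
Qed.

End sigma_past.

Section probability_Rintegral.
Context (R : realType) (d : measure_display) (Omega : measurableType d).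
Variable P : probability Omega R.
Implicit Types f g : Omega -> R.

Lemma integrable_EFinD f g : P.-integrable setT (EFin \o f) ->
  P.-integrable setT (EFin \o g) -> P.-integrable setT (EFin \o (fun w => f w + g w)).
Proof. by move=> If Ig; apply: eq_integrable (integrableD _ If Ig). Qed.

Lemma integrable_EFinZ (k : R) f : P.-integrable setT (EFin \o f) ->
  P.-integrable setT (EFin \o (fun w => k * f w)).
Proof. by move=> If; apply: eq_integrable (integrableZl _ k If). Qed.

Lemma integrable_EFin_cst (k : R) : P.-integrable setT (EFin \o (fun=> k)).
Proof. exact: finite_measure_integrable_cst. Qed.

Lemma Rintegral_prob_cst (k : R) : \int[P]_w k = k.
Proof.
rewrite Rintegral_cst //.
have -> : fine (P [set: Omega]) = 1 by rewrite probability_setT.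
by rewrite mulr1.
Qed.

Lemma integral_prob_cst (k : \bar R) : (\int[P]_w k = k)%E.
Proof.
by rewrite integral_cst // -[RHS]mule1; congr (_ * _)%E; exact: probability_setT.
Qed.

Lemma integral_EFin_Rintegral f : P.-integrable setT (EFin \o f) ->
  (\int[P]_w (f w)%:E = (\int[P]_w f w)%:E)%E.
Proof. by move=> If; rewrite fineK // integrable_fin_num. Qed.

End probability_Rintegral.

Section alpha_weights.
Context (R : realType) (a : R) (T : nat).
Hypotheses (a_ge0 : 0 <= a) (a_le1 : a <= 1).

Lemma alpha_den_gt0 t : (t < T)%N -> 0 < a + T%:R - t%:R.
Proof.
move=> tT; have : t.+1%:R <= T%:R :> R by rewrite ler_nat.
by rewrite -natr1; have := a_ge0; lra.
Qed.

Lemma alphaS t : (t < T)%N ->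
  alpha a T t.+1 = (T%:R - t%:R + 1) / (a + T%:R - t%:R) * alpha a T t.
Proof. by move=> _ /=; congr (_ / _ * _); rewrite -natr1; ring. Qed.

Lemma alphaS_rec t : (t < T)%N ->
  alpha a T t.+1 * (a + T%:R - t%:R) = alpha a T t * (T%:R - t%:R + 1).
Proof.
by move=> tT; rewrite alphaS //; field; exact/lt0r_neq0/alpha_den_gt0.
Qed.

Lemma alpha_gt0 t : (t <= T)%N -> 0 < alpha a T t.
Proof.
elim: t => [//|t IH] tT; rewrite alphaS // mulr_gt0 ?IH 1?ltnW //.
by rewrite divr_gt0 ?alpha_den_gt0 //; move: (alpha_den_gt0 tT) a_le1; lra.
Qed.

Lemma alpha_le t : (t < T)%N -> alpha a T t <= alpha a T t.+1.
Proof.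
move=> tT; rewrite alphaS // ler_peMl ?(ltW (alpha_gt0 (ltnW tT))) //.
by rewrite ler_pdivlMr ?alpha_den_gt0 // mul1r; have := a_le1; lra.
Qed.

End alpha_weights.

Section alpha_weighted_recursion.
Context (R : realType) (a c v : R) (T : nat).
(* In the application, [d t], [m0 t] and [m t s] are E[h(x_t) - h^*], E|x_t - x^*|^2
   and E|x_t - x_s|^2. *)
Variables (d m0 : nat -> R) (m : nat -> nat -> R).
Hypotheses (a_ge0 : 0 <= a) (a_le1 : a <= 1) (c_ge0 : 0 <= c).
Hypotheses (d0_ge0 : 0 <= d 0) (m0_ge0 : forall u, 0 <= m0 u).
Hypotheses (m_ge0 : forall u s, 0 <= m u s) (m_diag : forall u, m u u = 0).
Hypothesis step_opt : forall t, (t <= T)%N ->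
  d t.+1 - a * d t <= c * (m0 t - m0 t.+1) + v.
Hypothesis step_past : forall t s, (1 <= s <= t)%N -> (t <= T)%N ->
  d t.+1 - (d s + a * d t) <= c * (m t s - m t.+1 s) + v.

Local Notation al := (alpha a T).
Local Notation nu s := (al s - al s.-1).

Definition weighted_dist t u := m0 u + \sum_(1 <= s < t.+1) nu s * m u s.
Definition weighted_gap t := \sum_(1 <= s < t.+1) nu s * d s.
Definition lyapunov t :=
  al t * d t.+1 + c * weighted_dist t t.+1 + (T%:R - t%:R) * weighted_gap t.

Lemma sum_nu t : \sum_(1 <= s < t.+1) nu s = al t - 1.
Proof.
elim: t => [|t IH]; first by rewrite big_geq // subrr.
by rewrite big_nat_recr //= IH; ring.
Qed.

Lemma nu_ge0 s : (1 <= s <= T)%N -> 0 <= nu s.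
Proof. by case: s => // s /andP [_ sT]; rewrite subr_ge0 alpha_le. Qed.

Lemma weighted_dist_ge0 t u : (t <= T)%N -> 0 <= weighted_dist t u.
Proof.
move=> tT; apply: addr_ge0 => //; rewrite /weighted_dist big_nat.
apply: sumr_ge0 => s /andP [s_ge1 st].
by rewrite mulr_ge0 // nu_ge0 // s_ge1 (leq_trans _ tT).
Qed.

(* [step_opt t] plus the [step_past t s], [1 <= s <= t], weighted by [nu s]:
   the total weight is [al t]. *)
Lemma averaged_step t : (t <= T)%N ->
  al t * d t.+1 - a * al t * d t - weighted_gap t <=
  c * (weighted_dist t t - weighted_dist t t.+1) + al t * v.
Proof.
move=> tT.
have weighted : \sum_(1 <= s < t.+1) nu s * (d t.+1 - (d s + a * d t)) <=
                \sum_(1 <= s < t.+1) nu s * (c * (m t s - m t.+1 s) + v).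
  rewrite !big_nat ler_sum // => s /andP [s_ge1 st].
  by rewrite ler_wpM2l ?nu_ge0 ?step_past ?s_ge1 // (leq_trans _ tT).
have lhsE : \sum_(1 <= s < t.+1) nu s * (d t.+1 - (d s + a * d t)) =
            (al t - 1) * (d t.+1 - a * d t) - weighted_gap t.
  by rewrite -sum_nu mulr_suml /weighted_gap -sumrB; apply: eq_bigr => s _; ring.
have rhsE : \sum_(1 <= s < t.+1) nu s * (c * (m t s - m t.+1 s) + v) =
    c * (\sum_(1 <= s < t.+1) nu s * m t s - \sum_(1 <= s < t.+1) nu s * m t.+1 s)
    + (al t - 1) * v.
  by rewrite -sum_nu mulr_suml -sumrB mulr_sumr -big_split; apply: eq_bigr => s _ /=; ring.
move: weighted (step_opt tT); rewrite lhsE rhsE /weighted_dist; lra.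
Qed.

Lemma lyapunov0 : lyapunov 0 <= a * d 0 + c * m0 0 + v.
Proof.
have := averaged_step (leq0n T); rewrite /lyapunov /weighted_dist /weighted_gap.
by rewrite !big_geq //=; lra.
Qed.

Lemma lyapunovS t : (t < T)%N -> lyapunov t.+1 <= lyapunov t + al t.+1 * v.
Proof.
move=> tT; have := averaged_step tT.
have distE : weighted_dist t.+1 t.+1 = weighted_dist t t.+1.
  by rewrite /weighted_dist big_nat_recr //= m_diag mulr0 addr0.
have gapE : weighted_gap t.+1 = weighted_gap t + (al t.+1 - al t) * d t.+1.
  by rewrite /weighted_gap big_nat_recr.
(* The recursion defining [alpha] is exactly what cancels the [d t.+1] terms. *)
have weightE :
    (T%:R - t%:R) * ((al t.+1 - al t) * d t.+1) + a * al t.+1 * d t.+1 = al t * d t.+1.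
  apply/eqP; rewrite -subr_eq0.
  have -> : (T%:R - t%:R) * ((al t.+1 - al t) * d t.+1) + a * al t.+1 * d t.+1
      - al t * d t.+1 =
      d t.+1 * (al t.+1 * (a + T%:R - t%:R) - al t * (T%:R - t%:R + 1)) by ring.
  by rewrite alphaS_rec // subrr mulr0.
rewrite /lyapunov distE gapE -natr1; lra.
Qed.

Lemma lyapunov_le t : (t <= T)%N ->
  lyapunov t <= a * d 0 + c * m0 0 + v * \sum_(0 <= u < t.+1) al u.
Proof.
elim: t => [_|t IH tT]; first by rewrite big_nat1 /= mulr1 lyapunov0.
rewrite big_nat_recr //= mulrDr addrA (le_trans (lyapunovS tT)) // mulrC.
by rewrite lerD2r IH // ltnW.
Qed.

Lemma alpha_weighted_gap_le :
  al T * d T.+1 <= c * m0 0 + v * \sum_(0 <= t < T.+1) al t + d 0.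
Proof.
have := lyapunov_le (leqnn T); rewrite /lyapunov subrr mul0r addr0.
have := mulr_ge0 c_ge0 (weighted_dist_ge0 T.+1 (leqnn T)).
have : a * d 0 <= d 0 by rewrite ler_piMl.
lra.
Qed.

End alpha_weighted_recursion.

Section prox_sgd_parameters.
Context (R : realType) (n : nat).

Lemma is_prox_fin_num (tau : R) (g : 'rV[R]_n -> \bar R) (y p : 'rV[R]_n) :
  0 < tau -> proper_efun g -> is_prox tau g y p -> g p \is a fin_num.
Proof.
move=> tau_gt0 [g_ninfty [u gu]] /(_ u).
move: (g_ninfty p) (g_ninfty u) gu; case: (g p) => [r| |] //; case: (g u) => [r'| |] //.
by rewrite /= mulry gtr0_sg // mul1e.
Qed.

Lemma stepsize_constants (tau L : R) : 0 < tau -> 0 < L -> tau * L < 1 / 2 ->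
  let eps := (1 - 2 * tau * L) / (1 + 2 * tau * L) in
  [/\ 0 < eps, 0 <= 2 * tau * L * (1 + eps) & 2 * tau * L * (1 + eps) <= 1].
Proof.
move=> tau_gt0 L_gt0 tauL eps.
have q_gt0 : 0 < 2 * tau * L by rewrite -mulrA mulr_gt0 // mulr_gt0.
have aE : 2 * tau * L * (1 + eps) = 2 * (2 * tau * L) / (1 + 2 * tau * L).
  by rewrite /eps; field; apply: lt0r_neq0; lra.
have q_lt1 : 2 * tau * L < 1 by rewrite -mulrA; lra.
split.
- by rewrite divr_gt0; lra.
- by rewrite aE divr_ge0; lra.
- by rewrite aE ler_pdivrMr; lra.
Qed.

End prox_sgd_parameters.

Section prox_sgd_expectation.
Context (R : realType) (n : nat) (dO : measure_display) (Omega : measurableType dO).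
Variables (P : probability Omega R) (x : nat -> Omega -> 'rV[R]_n) (x0 xs : 'rV[R]_n).
Variables (h : 'rV[R]_n -> \bar R) (hs a c v : R) (T : nat).
Hypotheses (a_ge0 : 0 <= a) (a_le1 : a <= 1) (c_gt0 : 0 < c) (v_ge0 : 0 <= v).
Hypothesis x0E : forall w, x 0 w = x0.
Hypothesis x_meas : forall t j, (t <= T.+1)%N ->
  measurable_fun setT (fun w => x t w ord0 j).
Hypothesis hx_meas : forall t, (t <= T.+1)%N -> measurable_fun setT (h \o x t).
Hypothesis hx_fin : forall t w, (t <= T.+1)%N -> h (x t w) \is a fin_num.
Hypothesis h_ge : forall u, (hs%:E <= h u)%E.
Hypothesis hxs : h xs = hs%:E.
Hypothesis one_step : forall t (z : Omega -> 'rV[R]_n), (t <= T)%N ->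
  measurable_wrt (sigma_past x t) z ->
  (\int[P]_w (h (x t.+1 w) - h (z w) - a%:E * h (x t w) + (a * hs)%:E)
   <= \int[P]_w ((c * (sqnorm (x t w - z w) - sqnorm (x t.+1 w - z w)) + v)%:E))%E.

Definition gap t w := fine (h (x t w)) - hs.
Definition sqdist t (z : Omega -> 'rV[R]_n) w := sqnorm (x t w - z w).

Lemma hxE t w : (t <= T.+1)%N -> h (x t w) = (gap t w + hs)%:E.
Proof. by move=> tT; rewrite /gap subrK fineK // hx_fin. Qed.

Lemma gap_ge0 t w : (t <= T.+1)%N -> 0 <= gap t w.
Proof. by move=> tT; have := h_ge (x t w); rewrite hxE // lee_fin lerDr. Qed.

Lemma measurable_gap t : (t <= T.+1)%N -> measurable_fun setT (gap t).
Proof.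
move=> tT; apply: measurable_funB => //.
by apply: measurableT_comp (hx_meas tT); exact: fine_measurable.
Qed.

Lemma measurable_sqdist t (z : Omega -> 'rV[R]_n) : (t <= T.+1)%N ->
  (forall j, measurable_fun setT (fun w => z w ord0 j)) -> measurable_fun setT (sqdist t z).
Proof. by move=> tT; apply: measurable_sqnormB => j; exact: x_meas. Qed.

Lemma one_step_expectation t (z : Omega -> 'rV[R]_n) (Hz : Omega -> R) : (t <= T)%N ->
  measurable_wrt (sigma_past x t) z ->
  (forall j, measurable_fun setT (fun w => z w ord0 j)) ->
  (forall w, h (z w) = (Hz w + hs)%:E) -> measurable_fun setT Hz ->
  P.-integrable setT (EFin \o Hz) -> P.-integrable setT (EFin \o gap t) ->
  P.-integrable setT (EFin \o sqdist t z) ->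
  [/\ P.-integrable setT (EFin \o gap t.+1), P.-integrable setT (EFin \o sqdist t.+1 z) &
      \int[P]_w gap t.+1 w - (\int[P]_w Hz w + a * \int[P]_w gap t w) <=
      c * (\int[P]_w sqdist t z w - \int[P]_w sqdist t.+1 z w) + v].
Proof.
move=> tT z_past z_meas hzE Hz_meas IHz Igap Isqdist; have tT1 := leqW tT.
have Hz_ge0 w : 0 <= Hz w by have := h_ge (z w); rewrite hzE lee_fin lerDr.
have sqdist_ge0 u w : 0 <= sqdist u z w by exact: sqnorm_ge0.
have IG := integrable_EFinD IHz (integrable_EFinZ a Igap).
have IK := integrable_EFinD (integrable_EFinZ c Isqdist) (integrable_EFin_cst P v).
have lhsE : (\int[P]_w (h (x t.+1 w) - h (z w) - a%:E * h (x t w) + (a * hs)%:E) =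
    \int[P]_w (gap t.+1 w - (Hz w + a * gap t w))%:E)%E.
  by apply: eq_integral => w _; rewrite hzE !hxE // -EFinM -!EFinB -EFinD; congr (_%:E); ring.
have rhsE : (\int[P]_w ((c * (sqnorm (x t w - z w) - sqnorm (x t.+1 w - z w)) + v)%:E) =
    \int[P]_w ((c * sqdist t z w + v) - c * sqdist t.+1 z w)%:E)%E.
  by apply: eq_integral => w _; congr (_%:E); rewrite /sqdist; ring.
have := one_step tT z_past; rewrite lhsE rhsE.
case/le_integralB_ge0 => //.
- exact: measurable_gap.
- by apply: measurable_funD => //; apply: measurable_funM => //; exact: measurable_gap.
- by apply: measurable_funD => //; apply: measurable_funM => //; exact: measurable_sqdist.
- by apply: measurable_funM => //; exact: measurable_sqdist.
- by move=> w; exact: gap_ge0.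
- by move=> w; rewrite addr_ge0 ?mulr_ge0 ?gap_ge0.
- by move=> w; rewrite addr_ge0 ?mulr_ge0 // ltW.
- by move=> w; rewrite mulr_ge0 // ltW.
move=> Igap1 IM le_int.
have Isqdist1 : P.-integrable setT (EFin \o sqdist t.+1 z).
  apply: eq_integrable (integrable_EFinZ c^-1 IM) => // w _ /=.
  by rewrite mulKf // gt_eqF.
split => //.
have EG : \int[P]_w (Hz w + a * gap t w) = \int[P]_w Hz w + a * \int[P]_w gap t w.
  by rewrite RintegralD // ?RintegralZl //; exact: integrable_EFinZ.
have EK : \int[P]_w (c * sqdist t z w + v) = c * \int[P]_w sqdist t z w + v.
  rewrite RintegralD ?RintegralZl ?Rintegral_prob_cst //.
  - exact: integrable_EFinZ.
  - exact: integrable_EFin_cst.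
have EM : \int[P]_w (c * sqdist t.+1 z w) = c * \int[P]_w sqdist t.+1 z w.
  by rewrite RintegralZl.
move: le_int; rewrite !integral_EFin_Rintegral // -!EFinB lee_fin EG EK EM.
lra.
Qed.

Lemma one_step_expectation_opt t : (t <= T)%N ->
  P.-integrable setT (EFin \o gap t) -> P.-integrable setT (EFin \o sqdist t (fun=> xs)) ->
  [/\ P.-integrable setT (EFin \o gap t.+1),
      P.-integrable setT (EFin \o sqdist t.+1 (fun=> xs)) &
      \int[P]_w gap t.+1 w - a * \int[P]_w gap t w <=
      c * (\int[P]_w sqdist t (fun=> xs) w - \int[P]_w sqdist t.+1 (fun=> xs) w) + v].
Proof.
move=> tT Igap Isqdist; have hxs0 : h xs = (0 + hs)%:E by rewrite hxs add0r.
have [] := one_step_expectation tT (measurable_wrt_cst xs) (fun j => measurable_cst _)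
  (fun=> hxs0) (measurable_cst _) (integrable_EFin_cst P 0) Igap Isqdist.
by rewrite Rintegral_prob_cst add0r.
Qed.

Lemma integrable_gap_sqdist_opt t : (t <= T.+1)%N ->
  P.-integrable setT (EFin \o gap t) /\ P.-integrable setT (EFin \o sqdist t (fun=> xs)).
Proof.
elim: t => [_|t IH tT].
  split; [apply: eq_integrable (integrable_EFin_cst P (fine (h x0) - hs)) |
          apply: eq_integrable (integrable_EFin_cst P (sqnorm (x0 - xs)))] => // w _;
  by rewrite /= /gap /sqdist x0E.
have [Igap Isqdist] := IH (ltnW tT).
by have [] := one_step_expectation_opt tT Igap Isqdist.
Qed.

Lemma integrable_sqdist_iterate t s : (t <= T.+1)%N -> (s <= T.+1)%N ->
  P.-integrable setT (EFin \o sqdist t (x s)).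
Proof.
move=> tT sT; have [_ It] := integrable_gap_sqdist_opt tT.
have [_ Is] := integrable_gap_sqdist_opt sT.
apply: (le_integrable measurableT _ _ (integrable_EFinD (integrable_EFinZ 2 It)
  (integrable_EFinZ 2 Is))).
  by apply/measurable_EFinP/measurable_sqdist => // j; exact: x_meas.
move=> w _ /=; rewrite lee_fin !ger0_norm ?sqnormB_le ?sqnorm_ge0 //.
by rewrite addr_ge0 // mulr_ge0 // sqnorm_ge0.
Qed.

Lemma expected_gap_le : alpha a T T * \int[P]_w gap T.+1 w <=
  c * sqnorm (x0 - xs) + v * \sum_(0 <= t < T.+1) alpha a T t + \int[P]_w gap 0 w.
Proof.
have sqdist0E : \int[P]_w sqdist 0 (fun=> xs) w = sqnorm (x0 - xs).
  by rewrite -[RHS](Rintegral_prob_cst P); apply: eq_Rintegral => w _; rewrite /sqdist x0E.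
rewrite -sqdist0E.
apply: (alpha_weighted_gap_le (d := fun u => \int[P]_w gap u w)
  (m0 := fun u => \int[P]_w sqdist u (fun=> xs) w)
  (m := fun u s => \int[P]_w sqdist u (x s) w)) => //.
- exact/ltW.
- by apply: Rintegral_ge0 => w _; exact: gap_ge0.
- by move=> u; apply: Rintegral_ge0 => w _; exact: sqnorm_ge0.
- by move=> u s; apply: Rintegral_ge0 => w _; exact: sqnorm_ge0.
- move=> u; rewrite -[RHS](Rintegral_prob_cst P 0); apply: eq_Rintegral => w _.
  by rewrite /sqdist subrr sqnorm0.
- move=> t tT; have [Igap Isqdist] := integrable_gap_sqdist_opt (leqW tT).
  by have [] := one_step_expectation_opt tT Igap Isqdist.
- move=> t s /andP [s_ge1 st] tT; have tT1 := leqW tT; have sT := leq_trans st tT1.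
  have [Igap _] := integrable_gap_sqdist_opt tT1.
  have [Igap_s _] := integrable_gap_sqdist_opt sT.
  by have [] := one_step_expectation tT (measurable_wrt_sigma_past st)
    (fun j => x_meas j sT) (fun w => hxE w sT) (measurable_gap sT) Igap_s Igap
    (integrable_sqdist_iterate tT1 sT).
Qed.

Lemma integral_h_subE t : (t <= T.+1)%N ->
  (\int[P]_w (h (x t w) - hs%:E) = (\int[P]_w gap t w)%:E)%E.
Proof.
move=> tT; have [Igap _] := integrable_gap_sqdist_opt tT.
rewrite -integral_EFin_Rintegral //; apply: eq_integral => w _.
by rewrite hxE // -EFinB addrK.
Qed.

Lemma prox_sgd_gap_bound :
  (\int[P]_w (h (x T.+1 w) - hs%:E) <=
   (c / alpha a T T)%:E * \int[P]_w (sqnorm (x 0 w - xs))%:E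
   + (v / alpha a T T * alpha a T 0)%:E
   + (v / alpha a T T * \sum_(1 <= t < T.+1) alpha a T t)%:E
   + (1 / alpha a T T)%:E * \int[P]_w (h (x 0 w) - hs%:E))%E.
Proof.
have alT_gt0 := alpha_gt0 a_ge0 a_le1 (leqnn T).
have sqdist0E : (\int[P]_w (sqnorm (x 0 w - xs))%:E = (sqnorm (x0 - xs))%:E)%E.
  by under eq_integral do rewrite x0E; exact: integral_prob_cst.
rewrite !integral_h_subE // sqdist0E -!EFinM -!EFinD lee_fin -(ler_pM2l alT_gt0).
set S := \sum_(1 <= t < T.+1) _.
have -> : alpha a T T * (c / alpha a T T * sqnorm (x0 - xs) + v / alpha a T T * alpha a T 0 +
    v / alpha a T T * S + 1 / alpha a T T * \int[P]_w gap 0 w) =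
    c * sqnorm (x0 - xs) + v * (1 + S) + \int[P]_w gap 0 w.
  by rewrite /=; field; exact: lt0r_neq0.
by have := expected_gap_le; rewrite big_ltn.
Qed.

End prox_sgd_expectation.

Theorem lemmaA6 (R : realType) (n : nat)
  (dI : measure_display) (I : measurableType dI) (D : probability I R)
  (fi : I -> 'rV[R]_n -> R) (gfi : I -> 'rV[R]_n -> 'rV[R]_n) (L : R)
  (f : 'rV[R]_n -> R) (gF : 'rV[R]_n -> 'rV[R]_n) (g : 'rV[R]_n -> \bar R)
  (hs : R) (xbar : 'rV[R]_n) (sigma2 : R)
  (dO : measure_display) (Omega : measurableType dO) (P : probability Omega R)
  (idx : nat -> Omega -> I) (x : nat -> Omega -> 'rV[R]_n) (x0 : 'rV[R]_n)
  (T : nat) (tau : R) :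
  (* the f_i : convex, differentiable, L-Lipschitz gradient *)
  0 < L ->
  (forall i, convex_rfun (fi i)) ->
  (forall i, has_gradient (fi i) (gfi i)) ->
  (forall i u w, enorm (gfi i u - gfi i w) <= L * enorm (u - w)) ->
  (* f = E_{i~D} f_i  and  E_{i~D} grad f_i = grad f *)
  (forall u, D.-integrable setT (fun i => (fi i u)%:E) /\
             ((f u)%:E = \int[D]_i (fi i u)%:E)%E) ->
  has_gradient f gF ->
  (forall u (j : 'I_n), D.-integrable setT (fun i => (gfi i u ord0 j)%:E) /\
             ((gF u ord0 j)%:E = \int[D]_i (gfi i u ord0 j)%:E)%E) ->
  (* g proper, convex, lsc *)
  proper_efun g -> convex_efun g -> lower_semicontinuous g ->
  let h := fun u => ((f u)%:E + g u)%E in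
  (* h^* = min h, attained at xbar *)
  (forall u, (hs%:E <= h u)%E) -> h xbar = hs%:E ->
  (* sigma_*^2 = E_{i~D} ||grad f_i(xbar)||^2 < oo *)
  (\int[D]_i (sqnorm (gfi i xbar))%:E = sigma2%:E)%E ->
  (* i_t i.i.d. ~ D, i_t independent of x_0, ..., x_t *)
  (forall t, measurable_fun setT (idx t)) ->
  (forall t B, measurable B -> P (idx t @^-1` B) = D B) ->
  mutually_independent P idx ->
  (forall t A B, sigma_past x t A -> measurable B ->
     P (A `&` idx t @^-1` B) = (P A * P (idx t @^-1` B))%E) ->
  (* the iterates: x_0 deterministic, random vectors, proximal SGD *)
  (forall w, x 0%N w = x0) ->
  (forall t (j : 'I_n), (t <= T.+1)%N ->
     measurable_fun setT (fun w => x t w ord0 j)) ->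
  (1 <= T)%N -> 0 < tau -> tau * L < 1 / 2 ->
  (forall t w, (t <= T)%N ->
     is_prox tau g (x t w - tau *: gfi (idx t w) (x t w)) (x t.+1 w)) ->
  let eps := (1 - 2 * tau * L) / (1 + 2 * tau * L) in
  let a := 2 * tau * L * (1 + eps) in
  let v := (1 + 1 / eps) * sigma2 * tau in
  (* the one-step conditional inequality, for every sigma(x_0..x_t)-measurable z_t *)
  (forall t (z : Omega -> 'rV[R]_n) (A : set Omega), (t <= T)%N ->
     measurable_wrt (sigma_past x t) z -> sigma_past x t A ->
     (\int[P]_(w in A) (h (x t.+1 w) - h (z w) - a%:E * h (x t w) + (a * hs)%:E)
      <= \int[P]_(w in A)
           ((1 / (2 * tau)) * (sqnorm (x t w - z w) - sqnorm (x t.+1 w - z w))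
            + v)%:E)%E) ->
  forall xs : 'rV[R]_n, h xs = hs%:E ->
  (\int[P]_w (h (x T.+1 w) - hs%:E)
   <= (1 / (2 * tau * alpha a T T))%:E * \int[P]_w (sqnorm (x 0%N w - xs))%:E
      + (v / alpha a T T * alpha a T 0)%:E
      + (v / alpha a T T * \sum_(1 <= t < T.+1) alpha a T t)%:E
      + (1 / alpha a T T)%:E * \int[P]_w (h (x 0%N w) - hs%:E))%E.
Proof.
move=> L_gt0 _ _ _ _ f_grad _ g_proper _ g_lsc h h_ge _ sigma2E _ _ _ _ x0E x_meas _
  tau_gt0 tauL prox eps a v one_step xs hxs.
have [eps_gt0 a_ge0 a_le1] := stepsize_constants tau_gt0 L_gt0 tauL.
have sigma2_ge0 : 0 <= sigma2.
  by rewrite -lee_fin -sigma2E; apply: integral_ge0 => i _; rewrite lee_fin sqnorm_ge0.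
have v_ge0 : 0 <= v.
  by rewrite /v !mulr_ge0 ?(ltW tau_gt0) // addr_ge0 // divr_ge0 // ltW.
have alT_gt0 := alpha_gt0 a_ge0 a_le1 (leqnn T).
have -> : 1 / (2 * tau * alpha a T T) = 1 / (2 * tau) / alpha a T T.
  by field; rewrite !lt0r_neq0.
have [hx0_fin|hx0_inf] := boolP (h x0 \is a fin_num); last first.
  have hx0E : h x0 = +oo%E by move: hx0_inf (h_ge x0); case: (h x0).
  have sqI : (\int[P]_w (sqnorm (x 0 w - xs))%:E = (sqnorm (x0 - xs))%:E)%E.
    by under eq_integral do rewrite x0E; exact: integral_prob_cst.
  have hI : (\int[P]_w (h (x 0%N w) - hs%:E) = +oo)%E.
    by under eq_integral do rewrite x0E hx0E /=; exact: integral_prob_cst.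
  by rewrite sqI hI gt0_muley ?lte_fin ?divr_gt0 // -!EFinM -!EFinD addey ?leey.
have c_gt0 : 0 < 1 / (2 * tau) by rewrite divr_gt0 // mulr_gt0.
have f_cont : continuous f := fun u => differentiable_continuous (f_grad u).1.
have hx_meas t : (t <= T.+1)%N -> measurable_fun setT (h \o x t).
  move=> tT.
  exact: (measurable_continuous_add_lsc_comp (fun j => x_meas t j tT) f_cont g_lsc).
have hx_fin t w : (t <= T.+1)%N -> h (x t w) \is a fin_num.
  case: t => [_|t tT]; first by rewrite x0E.
  by rewrite fin_numD /= (is_prox_fin_num tau_gt0 g_proper (prox t w tT)).
exact: (prox_sgd_gap_bound a_ge0 a_le1 c_gt0 v_ge0 x0E x_meas hx_meas hx_fin h_ge hxs
  (fun t z tT z_past => one_step t z setT tT z_past (@sigma_past_setT _ _ _ _ x t))).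
Qed.
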